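(* For $d\in[6.74,7.5]$, $|\Psi_d'(x)|<1$ for all $x\in[\frac38,\frac12]$.
   Context: $\Psi_d=\dot\Psi\circ\hat\Psi$ with $\hat\Psi(x)=\frac{1-2x^{2}}{1-x^{2}}$ and $\dot\Psi(v)=\frac{1-v^{d-1}}{2-v^{d-1}}$ ($d$ real). *)

From Stdlib Require Import Reals.
From Coquelicot Require Import Coquelicot.
Open Scope R_scope.

Definition Psi_hat (x : R) : R := (1 - 2 * x ^ 2) / (1 - x ^ 2).

Definition Psi_dot (d v : R) : R :=
  (1 - Rpower v (d - 1)) / (2 - Rpower v (d - 1)).

Definition Psi (d x : R) : R := Psi_dot d (Psi_hat x).

From Stdlib Require Import Reals Lra.
From Coquelicot Require Import Coquelicot.
Open Scope R_scope.

(* With [v = Psi_hat x] and [w = v ^ (d - 1)] the chain rule gives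
   [Psi_d'(x) = 2 (d - 1) w x / ((1 - 2 x^2) (1 - x^2) (2 - w)^2) >= 0].
   On [[3/8, 1/2]] we have [v <= Psi_hat (3/8) = 46/55], hence [5.74 ln v <= -1]; in that range
   [t |-> t v^t] is decreasing, so the derivative is largest at [d = 6.74].  For [d = 6.74] we use [v^5.74 <= v^(17/3)], whose cube [v^17] is rational in
   [x], and check the resulting inequality on six subintervals, bounding every factor by its value
   at an endpoint. *)

Lemma Psi_hat_eq x : x ^ 2 <> 1 -> Psi_hat x = 1 - x ^ 2 / (1 - x ^ 2).
Proof. intros Hx; unfold Psi_hat; field; lra. Qed.

Lemma Psi_hat_pos x : 2 * x ^ 2 < 1 -> 0 < Psi_hat x.
Proof. intros Hx; unfold Psi_hat; apply Rdiv_lt_0_compat; nra. Qed.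

Lemma Psi_hat_le_1 x : x ^ 2 < 1 -> Psi_hat x <= 1.
Proof.
  intros Hx; rewrite Psi_hat_eq by lra.
  enough (0 <= x ^ 2 / (1 - x ^ 2)) by lra.
  apply Rdiv_le_0_compat; nra.
Qed.

Lemma Psi_hat_antitone x y : 0 <= x <= y -> y ^ 2 < 1 -> Psi_hat y <= Psi_hat x.
Proof.
  intros Hxy Hy.
  assert (Hxy2 : x ^ 2 <= y ^ 2) by nra.
  rewrite !Psi_hat_eq by lra.
  enough (x ^ 2 / (1 - x ^ 2) <= y ^ 2 / (1 - y ^ 2)) by lra.
  unfold Rdiv; apply Rmult_le_compat; try nra.
  - left; apply Rinv_0_lt_compat; lra.
  - apply Rinv_le_contravar; lra.
Qed.

Lemma exp_le_exp x y : x <= y -> exp x <= exp y.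
Proof. intros [Hlt | ->]; [left; now apply exp_increasing | apply Rle_refl]. Qed.

Lemma Rle_Rpower_base_le_1 e n m :
  0 < e <= 1 -> n <= m -> Rpower e m <= Rpower e n.
Proof.
  intros He Hnm; unfold Rpower.
  assert (Hln : ln e <= 0) by (rewrite <- ln_1; apply ln_le; lra).
  apply exp_le_exp; nra.
Qed.

Lemma Rpower_le_1 e a : 0 < e <= 1 -> 0 <= a -> Rpower e a <= 1.
Proof.
  intros He Ha; rewrite <- (Rpower_O e) by lra.
  now apply Rle_Rpower_base_le_1.
Qed.

(* With [s = a - b]: [v ^ s <= exp (- s / b)] and [exp (s / b) >= 1 + s / b = a / b]. *)
Lemma mul_Rpower_antitone a b v :
  0 < b <= a -> 0 < v -> b * ln v <= -1 -> a * Rpower v a <= b * Rpower v b.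
Proof.
  intros Hab Hv Hln.
  assert (Hsplit : Rpower v a = Rpower v b * exp ((a - b) * ln v)).
  { unfold Rpower; rewrite <- exp_plus; f_equal; ring. }
  assert (Hexp : (a - b) * ln v <= - ((a - b) / b)).
  { apply (Rmult_le_reg_l b); [lra|].
    replace (b * - ((a - b) / b)) with (- (a - b)) by (field; lra). nra. }
  assert (Hgrowth : a / b <= exp ((a - b) / b)).
  { replace (a / b) with (1 + (a - b) / b) by (field; lra). apply exp_ineq1_le. }
  assert (Hdecay : exp ((a - b) * ln v) <= b / a).
  { eapply Rle_trans; [apply exp_le_exp, Hexp|].
    rewrite exp_Ropp; replace (b / a) with (/ (a / b)) by (field; lra).
    apply Rinv_le_contravar; [apply Rdiv_lt_0_compat; lra | exact Hgrowth]. }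
  assert (Hgain : a * exp ((a - b) * ln v) <= b).
  { replace b with (a * (b / a)) at 2 by (field; lra). apply Rmult_le_compat_l; lra. }
  assert (Hwb : 0 < Rpower v b) by apply exp_pos.
  rewrite Hsplit; nra.
Qed.

Lemma exp_le_inv_pow n z : 0 <= z < 1 -> exp (INR n * z) <= (/ (1 - z)) ^ n.
Proof.
  intros Hz.
  assert (Hpow : exp (INR n * z) = exp z ^ n).
  { rewrite <- Rpower_pow by apply exp_pos. unfold Rpower. now rewrite ln_exp. }
  assert (Hexp : exp z <= / (1 - z)).
  { rewrite <- (Rinv_inv (exp z)). apply Rinv_le_contravar; [lra|].
    rewrite <- exp_Ropp; pose proof (exp_ineq1_le (- z)); lra. }
  rewrite Hpow; apply pow_incr; split; [left; apply exp_pos | exact Hexp].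
Qed.

(* [46/55 = Psi_hat (3/8)]; the eighth power gives a sharp enough bound on [exp]. *)
Lemma ln_46_55_le : 574 / 100 * ln (46 / 55) <= -1.
Proof.
  assert (Hexp : exp (100 / 574) <= 55 / 46).
  { replace (100 / 574) with (INR 8 * (100 / 4592)) by (simpl; field).
    eapply Rle_trans; [apply exp_le_inv_pow; lra|].
    replace (/ (1 - 100 / 4592)) with (4592 / 4492) by field. lra. }
  assert (Hln : 100 / 574 <= ln (55 / 46)).
  { rewrite <- (ln_exp (100 / 574)). apply ln_le; [apply exp_pos | exact Hexp]. }
  replace (46 / 55) with (/ (55 / 46)) by field.
  rewrite ln_Rinv by lra. lra.
Qed.

Lemma Rpower_le_of_pow_le v c m n :
  0 < v -> 0 < c -> (0 < n)%nat -> v ^ m <= c ^ n -> Rpower v (INR m / INR n) <= c.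
Proof.
  intros Hv Hc Hn Hmn.
  assert (HnR : 0 < INR n) by now apply lt_0_INR.
  assert (Hroot : Rpower (Rpower v (INR m / INR n)) (INR n) = v ^ m).
  { rewrite Rpower_mult. replace (INR m / INR n * INR n) with (INR m) by (field; lra).
    now apply Rpower_pow. }
  destruct (Rle_lt_dec (Rpower v (INR m / INR n)) c) as [Hle | Hlt]; [exact Hle|].
  exfalso.
  pose proof (Rlt_Rpower_l c (Rpower v (INR m / INR n)) (INR n) HnR (conj Hc Hlt)).
  rewrite Hroot, Rpower_pow in * by lra. lra.
Qed.

Definition Psi_derivative (d x : R) : R :=
  let w := Rpower (Psi_hat x) (d - 1) in
  2 * (d - 1) * w * x / ((1 - 2 * x ^ 2) * (1 - x ^ 2) * (2 - w) ^ 2).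

Lemma is_derive_Psi_hat x : x ^ 2 <> 1 -> is_derive Psi_hat x (- 2 * x / (1 - x ^ 2) ^ 2).
Proof.
  intros Hx; unfold Psi_hat; auto_derive.
  - simpl in Hx; lra.
  - simpl in Hx; field; lra.
Qed.

Lemma is_derive_Psi_dot d v :
  0 < v -> Rpower v (d - 1) <> 2 ->
  is_derive (Psi_dot d) v (- (d - 1) * Rpower v (d - 1) / (v * (2 - Rpower v (d - 1)) ^ 2)).
Proof.
  intros Hv Hw; unfold Psi_dot, Rpower in *; auto_derive.
  - repeat split; lra.
  - field; lra.
Qed.

Lemma is_derive_Psi d x : 1 <= d -> 2 * x ^ 2 < 1 -> is_derive (Psi d) x (Psi_derivative d x).
Proof.
  intros Hd Hx.
  pose proof (Psi_hat_pos x Hx) as Hv0.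
  pose proof (Psi_hat_le_1 x ltac:(nra)) as Hv1.
  assert (Hw : Rpower (Psi_hat x) (d - 1) <= 1) by (apply Rpower_le_1; lra).
  replace (Psi_derivative d x) with
    (scal (- 2 * x / (1 - x ^ 2) ^ 2)
      (- (d - 1) * Rpower (Psi_hat x) (d - 1)
        / (Psi_hat x * (2 - Rpower (Psi_hat x) (d - 1)) ^ 2))).
  - apply (is_derive_comp (Psi_dot d) Psi_hat).
    + apply is_derive_Psi_dot; lra.
    + apply is_derive_Psi_hat; lra.
  - unfold Psi_derivative; cbv [scal]; simpl; cbv [mult]; simpl.
    set (w := Rpower _ _) in *. unfold Psi_hat in *.
    field; repeat split; nra.
Qed.

Lemma Psi_derivative_nonneg d x : 1 <= d -> 0 <= x -> 2 * x ^ 2 < 1 -> 0 <= Psi_derivative d x.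
Proof.
  intros Hd Hx Hx2.
  pose proof (Psi_hat_pos x Hx2) as Hv0.
  pose proof (Psi_hat_le_1 x ltac:(nra)) as Hv1.
  assert (Hw : Rpower (Psi_hat x) (d - 1) <= 1) by (apply Rpower_le_1; lra).
  assert (Hw_pos : 0 < Rpower (Psi_hat x) (d - 1)) by apply exp_pos.
  unfold Psi_derivative.
  apply Rdiv_le_0_compat.
  - apply Rmult_le_pos; [|lra]. apply Rmult_le_pos; nra.
  - apply Rmult_lt_0_compat; [nra|]. apply pow_lt; lra.
Qed.

(* Both [(d - 1) * w] and [w] decrease in [d]. *)
Lemma Psi_derivative_antitone d0 d x :
  1 < d0 <= d -> 0 <= x -> 2 * x ^ 2 < 1 -> (d0 - 1) * ln (Psi_hat x) <= -1 ->
  Psi_derivative d x <= Psi_derivative d0 x.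
Proof.
  intros Hd Hx Hx2 Hln.
  pose proof (Psi_hat_pos x Hx2) as Hv0.
  pose proof (Psi_hat_le_1 x ltac:(nra)) as Hv1.
  assert (Hnum : (d - 1) * Rpower (Psi_hat x) (d - 1) <= (d0 - 1) * Rpower (Psi_hat x) (d0 - 1))
    by (apply mul_Rpower_antitone; lra).
  assert (Hw : Rpower (Psi_hat x) (d - 1) <= Rpower (Psi_hat x) (d0 - 1))
    by (apply Rle_Rpower_base_le_1; lra).
  assert (Hw0 : Rpower (Psi_hat x) (d0 - 1) <= 1) by (apply Rpower_le_1; lra).
  assert (Hw_pos : 0 < Rpower (Psi_hat x) (d - 1)) by apply exp_pos.
  unfold Psi_derivative.
  set (w := Rpower (Psi_hat x) (d - 1)) in *.
  set (w0 := Rpower (Psi_hat x) (d0 - 1)) in *.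
  assert (Hq : 0 < (1 - 2 * x ^ 2) * (1 - x ^ 2)) by nra.
  unfold Rdiv; apply Rmult_le_compat.
  - assert (0 <= 2 * x * ((d - 1) * w)) by (apply Rmult_le_pos; nra). nra.
  - left; apply Rinv_0_lt_compat, Rmult_lt_0_compat; [lra | apply pow_lt; lra].
  - assert (2 * x * ((d - 1) * w) <= 2 * x * ((d0 - 1) * w0)) by (apply Rmult_le_compat_l; lra).
    nra.
  - apply Rinv_le_contravar; [apply Rmult_lt_0_compat; [lra | apply pow_lt; lra]|].
    apply Rmult_le_compat_l; [lra|]. apply pow_incr; lra.
Qed.

Lemma Psi_derivative_le_at_674 d x :
  674 / 100 <= d -> 3 / 8 <= x <= 1 / 2 -> Psi_derivative d x <= Psi_derivative (674 / 100) x.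
Proof.
  intros Hd Hx.
  apply Psi_derivative_antitone; try nra.
  assert (Hv : Psi_hat x <= 46 / 55).
  { replace (46 / 55) with (Psi_hat (3 / 8)) by (unfold Psi_hat; field).
    apply Psi_hat_antitone; nra. }
  assert (ln (Psi_hat x) <= ln (46 / 55)) by (apply ln_le; [apply Psi_hat_pos; nra | exact Hv]).
  pose proof ln_46_55_le. lra.
Qed.

(* On [[xi, xj]], [c] bounds [Psi_hat x ^ (17/3)], hence [w = Rpower (Psi_hat x) (574/100)]. *)
Lemma Psi_derivative_674_lt_1_on xi xj c x :
  3 / 8 <= xi <= x -> x <= xj <= 1 / 2 -> 0 < c <= 1 -> Psi_hat xi ^ 17 <= c ^ 3 ->
  2 * (574 / 100) * c * xj < (1 - 2 * xj ^ 2) * (1 - xj ^ 2) * (2 - c) ^ 2 ->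
  Psi_derivative (674 / 100) x < 1.
Proof.
  intros Hxi Hxj Hc Hc3 Hend.
  pose proof (Psi_hat_pos x ltac:(nra)) as Hv0.
  pose proof (Psi_hat_le_1 x ltac:(nra)) as Hv1.
  assert (Hv : Psi_hat x <= Psi_hat xi) by (apply Psi_hat_antitone; nra).
  assert (Hroot : Rpower (Psi_hat x) (INR 17 / INR 3) <= c).
  { apply Rpower_le_of_pow_le; [lra | lra | apply Nat.lt_0_succ |].
    apply Rle_trans with (Psi_hat xi ^ 17); [apply pow_incr; lra | exact Hc3]. }
  assert (Hw : Rpower (Psi_hat x) (674 / 100 - 1) <= c).
  { eapply Rle_trans; [|exact Hroot].
    apply Rle_Rpower_base_le_1; [lra | simpl; lra]. }
  assert (Hw_pos : 0 < Rpower (Psi_hat x) (674 / 100 - 1)) by apply exp_pos.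
  unfold Psi_derivative.
  set (w := Rpower (Psi_hat x) (674 / 100 - 1)) in *.
  assert (Hq : (1 - 2 * xj ^ 2) * (1 - xj ^ 2) <= (1 - 2 * x ^ 2) * (1 - x ^ 2)).
  { assert (Hsq : x ^ 2 <= xj ^ 2 <= 1 / 4) by nra.
    assert (0 <= (xj ^ 2 - x ^ 2) * (3 - 2 * (x ^ 2 + xj ^ 2))) by (apply Rmult_le_pos; lra).
    nra. }
  assert (Hden : (2 - c) ^ 2 <= (2 - w) ^ 2) by (apply pow_incr; lra).
  assert (Hqj : 0 < (1 - 2 * xj ^ 2) * (1 - xj ^ 2)) by nra.
  apply Rlt_div_l; [apply Rmult_lt_0_compat; [nra | apply pow_lt; lra]|].
  assert (2 * (674 / 100 - 1) * w * x <= 2 * (574 / 100) * c * xj) by nra.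
  assert ((1 - 2 * xj ^ 2) * (1 - xj ^ 2) * (2 - c) ^ 2
          <= (1 - 2 * x ^ 2) * (1 - x ^ 2) * (2 - w) ^ 2)
    by (apply Rmult_le_compat; nra).
  lra.
Qed.

Theorem lemma4p3 (d x : R) :
  674/100 <= d <= 15/2 -> 3/8 <= x <= 1/2 ->
  ex_derive (Psi d) x /\ Rabs (Derive (Psi d) x) < 1.
Proof.
  intros Hd Hx.
  assert (HD : is_derive (Psi d) x (Psi_derivative d x)) by (apply is_derive_Psi; nra).
  split; [eexists; exact HD|].
  rewrite (is_derive_unique _ _ _ HD), Rabs_pos_eq by (apply Psi_derivative_nonneg; nra).
  eapply Rle_lt_trans; [apply Psi_derivative_le_at_674; lra|].
  (* each [c] is [Psi_hat xi ^ (17/3)] rounded up *)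
  destruct (Rle_lt_dec x (49 / 128)).
  { apply (Psi_derivative_674_lt_1_on (3 / 8) (49 / 128) (73 / 200)); unfold Psi_hat; lra. }
  destruct (Rle_lt_dec x (25 / 64)).
  { apply (Psi_derivative_674_lt_1_on (49 / 128) (25 / 64) (69 / 200)); unfold Psi_hat; lra. }
  destruct (Rle_lt_dec x (13 / 32)).
  { apply (Psi_derivative_674_lt_1_on (25 / 64) (13 / 32) (163 / 500)); unfold Psi_hat; lra. }
  destruct (Rle_lt_dec x (7 / 16)).
  { apply (Psi_derivative_674_lt_1_on (13 / 32) (7 / 16) (289 / 1000)); unfold Psi_hat; lra. }
  destruct (Rle_lt_dec x (15 / 32)).
  { apply (Psi_derivative_674_lt_1_on (7 / 16) (15 / 32) (109 / 500)); unfold Psi_hat; lra. }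
  apply (Psi_derivative_674_lt_1_on (15 / 32) (1 / 2) (31 / 200)); unfold Psi_hat; lra.
Qed.
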